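(* Let $P, Q \subseteq \mathbb{R}^d$ be rational polytopes such that for every integer vector $w \in \mathbb{Z}^d$ and every real $s > 0$ we have $L_{P + w}(s) = L_{Q + w}(s)$. Then $P = Q$.
   Context: For a polytope $P \subseteq \mathbb{R}^d$ and real $s \ge 0$, the real Ehrhart function is $L_P(s) = \#(sP \cap \mathbb{Z}^d)$, where $sP = \{sx : x \in P\}$. A rational polytope is the convex hull of finitely many points of $\mathbb{Q}^d$. *)

From mathcomp Require Import ssreflect ssrfun ssrbool eqtype ssrnat seq fintype finfun.
From Stdlib Require Import Reals QArith Qreals ZArith List.

Set Implicit Arguments.
Unset Strict Implicit.

Open Scope R_scope.

Definition point (d : nat) := 'I_d -> R.
Definition region (d : nat) := point d -> Prop.

Definition lattice_pt (d : nat) := {ffun 'I_d -> Z}.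

Definition fsum (n : nat) (f : nat -> R) : R :=
  List.fold_right Rplus 0 (List.map f (List.seq 0 n)).

Definition conv_hull (d : nat) (V : list (point d)) : region d :=
  fun x => exists c : nat -> R,
    (forall k, (k < List.length V)%coq_nat -> 0 <= c k) /\
    fsum (List.length V) c = 1 /\
    forall i : 'I_d,
      x i = fsum (List.length V) (fun k => c k * List.nth k V (fun _ => 0) i).

Definition rational_point (d : nat) (v : point d) : Prop :=
  forall i : 'I_d, exists q : Q, v i = Q2R q.

Definition rational_polytope (d : nat) (P : region d) : Prop :=
  exists V : list (point d),
    (forall v, List.In v V -> rational_point v) /\
    (forall x, P x <-> conv_hull V x).

Definition translate (d : nat) (P : region d) (w : lattice_pt d) : region d :=
  fun x => P (fun i => x i - IZR (w i)).

Definition dilate_lattice (d : nat) (P : region d) (s : R) : lattice_pt d -> Prop :=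
  fun z => exists y : point d, P y /\ forall i : 'I_d, IZR (z i) = s * y i.

Definition has_card (d : nat) (A : lattice_pt d -> Prop) (n : nat) : Prop :=
  exists l : list (lattice_pt d),
    List.NoDup l /\ (forall z, List.In z l <-> A z) /\ List.length l = n.

Definition ehrhart_value (d : nat) (P : region d) (s : R) (n : nat) : Prop :=
  has_card (dilate_lattice P s) n.

(* Every vertex v of P lies in Q.  Otherwise write v = a/m with a integral
   and m > 0, pick an integer k larger than any coordinate distance from v to
   a point of Q, and dilate P + k a by s = m / (m k + 1): the lattice point a
   lies in s (P + k a), because s (v + k a) = a, while any lattice point z of
   s (Q + k a) would come from a point of Q at offset (z - a) (m k + 1) / m
   from v, which is v itself when z = a and farther than k from v otherwise.
   So L_{P+w}(s) > 0 = L_{Q+w}(s).  Hence P, the convex hull of its vertices,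
   is contained in the convex set Q, and symmetrically. *)
From mathcomp Require Import ssreflect ssrfun ssrbool eqtype ssrnat seq fintype finfun.
From Stdlib Require Import Reals QArith Qreals ZArith List Lra Lia.
From Stdlib Require Import FunctionalExtensionality Classical ClassicalEpsilon.
Set Implicit Arguments.
Unset Strict Implicit.
Open Scope R_scope.

Lemma fsum_S n f : fsum (S n) f = f 0%nat + fsum n (fun k => f (S k)).
Proof. by rewrite /fsum /= -List.seq_shift List.map_map. Qed.

Lemma fsum_ext n f g :
  (forall k, (k < n)%coq_nat -> f k = g k) -> fsum n f = fsum n g.
Proof.
elim: n f g => [|n IH] f g Hfg //.
rewrite !fsum_S Hfg; last lia.
by rewrite (IH (fun k => f (S k)) (fun k => g (S k))) // => k hk; apply: Hfg; lia.
Qed.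

Lemma fsum_plus n f g : fsum n (fun k => f k + g k) = fsum n f + fsum n g.
Proof.
elim: n f g => [|n IH] f g; first by rewrite /fsum /=; lra.
rewrite !fsum_S IH; lra.
Qed.

Lemma fsum_mult_l n c f : fsum n (fun k => c * f k) = c * fsum n f.
Proof.
elim: n f => [|n IH] f; first by rewrite /fsum /=; lra.
rewrite !fsum_S IH; lra.
Qed.

Lemma fsum_le n f g :
  (forall k, (k < n)%coq_nat -> f k <= g k) -> fsum n f <= fsum n g.
Proof.
elim: n f g => [|n IH] f g Hfg; first by rewrite /fsum /=; lra.
rewrite !fsum_S.
have := Hfg 0%nat ltac:(lia).
have := IH (fun k => f (S k)) (fun k => g (S k)) ltac:(move=> k hk; apply: Hfg; lia).
lra.
Qed.

Lemma fsum_Rabs n f : Rabs (fsum n f) <= fsum n (fun k => Rabs (f k)).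
Proof.
elim: n f => [|n IH] f; first by rewrite /fsum /= Rabs_R0; lra.
rewrite !fsum_S.
have := IH (fun k => f (S k)).
have := Rabs_triang (f 0%nat) (fsum n (fun k => f (S k))).
lra.
Qed.

Lemma fsum_nonneg n f : (forall k, (k < n)%coq_nat -> 0 <= f k) -> 0 <= fsum n f.
Proof.
elim: n f => [|n IH] f Hf; first by rewrite /fsum /=; lra.
rewrite fsum_S; have := Hf 0%nat ltac:(lia).
have := IH (fun k => f (S k)) ltac:(move=> k hk; apply: Hf; lia).
lra.
Qed.

Lemma fsum_term_le n f j :
  (forall k, (k < n)%coq_nat -> 0 <= f k) -> (j < n)%coq_nat -> f j <= fsum n f.
Proof.
elim: n f j => [|n IH] f j Hf hj; first lia.
have Hf' : forall k, (k < n)%coq_nat -> 0 <= f (S k) by move=> k hk; apply: Hf; lia.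
rewrite fsum_S; case: j hj => [|j] hj.
- have := fsum_nonneg Hf'; lra.
- have := IH _ j Hf' ltac:(lia); have := Hf 0%nat ltac:(lia); lra.
Qed.

Lemma fsum_mult_nonneg_eq0 n c u :
  (forall k, (k < n)%coq_nat -> 0 <= c k) -> fsum n c = 0 ->
  fsum n (fun k => c k * u k) = 0.
Proof.
elim: n c u => [|n IH] c u Hc //.
have Hc' : forall k, (k < n)%coq_nat -> 0 <= c (S k) by move=> k hk; apply: Hc; lia.
rewrite !fsum_S => hsum.
have := fsum_nonneg Hc'; have := Hc 0%nat ltac:(lia) => h0 h1.
have c0 : c 0%nat = 0 by lra.
rewrite c0 (IH (fun k => c (S k))) //; lra.
Qed.

Lemma fsum_delta n j g : (j < n)%coq_nat ->
  fsum n (fun k => (if eqn k j then 1 else 0) * g k) = g j.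
Proof.
elim: n j g => [|n IH] j g hj; first lia.
rewrite fsum_S; case: j hj => [|j] hj /=.
- rewrite fsum_mult_l; lra.
- by rewrite IH; [lra | lia].
Qed.

Section ConvexHull.
Variable d : nat.
Notation nthv V k := (List.nth k V (fun _ : 'I_d => 0)).

Lemma conv_hull_nth (V : list (point d)) j :
  (j < List.length V)%coq_nat -> conv_hull V (nthv V j).
Proof.
move=> hj; exists (fun k => if eqn k j then 1 else 0); split; [|split].
- by move=> k _; case: (eqn k j); lra.
- rewrite (@fsum_ext _ _ (fun k => (if eqn k j then 1 else 0) * 1)).
  + exact: fsum_delta.
  + by move=> *; lra.
- by move=> i; rewrite fsum_delta.
Qed.

Lemma conv_hull_convex (W : list (point d)) a b t :
  conv_hull W a -> conv_hull W b -> 0 <= t <= 1 ->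
  conv_hull W (fun i => t * a i + (1 - t) * b i).
Proof.
move=> [c [hc [sc ec]]] [c' [hc' [sc' ec']]] ht.
exists (fun k => t * c k + (1 - t) * c' k); split; [|split].
- by move=> k hk; have := hc k hk; have := hc' k hk; nra.
- rewrite fsum_plus !fsum_mult_l sc sc'; lra.
- move=> i; rewrite ec ec' -!fsum_mult_l -fsum_plus.
  by apply: fsum_ext => k _; lra.
Qed.

Lemma conv_hull_cons (v : point d) V x : conv_hull (v :: V) x ->
  x = v \/ exists t y,
    0 <= t <= 1 /\ conv_hull V y /\ x = (fun i => t * v i + (1 - t) * y i).
Proof.
move=> [c [hc [sc ec]]]; rewrite /= fsum_S in sc.
have hc' : forall k, (k < List.length V)%coq_nat -> 0 <= c (S k).
  by move=> k hk; apply: hc => /=; lia.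
have h0 := hc 0%nat ltac:(simpl; lia); have hrest := fsum_nonneg hc'.
case: (Req_dec (c 0%nat) 1) => c0.
- left; apply: functional_extensionality => i.
  rewrite ec fsum_S (@fsum_mult_nonneg_eq0 _ (fun k => c (S k)) (fun k => nthv V k i)) //.
  + by rewrite c0 /=; lra.
  + change (fsum (List.length V) (fun k => c (S k)) = 0); lra.
- right; exists (c 0%nat), (fun i => fsum (List.length V)
                             (fun k => c (S k) / (1 - c 0%nat) * nthv V k i)).
  split; [lra | split].
  + exists (fun k => c (S k) / (1 - c 0%nat)); split; [|split] => //.
    * move=> k hk; apply: Rmult_le_pos; first exact: hc'.
      by apply/Rlt_le/Rinv_0_lt_compat; lra.
    * rewrite (@fsum_ext _ _ (fun k => / (1 - c 0%nat) * c (S k))); last first.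
        by move=> *; rewrite /Rdiv; lra.
      rewrite fsum_mult_l (_ : fsum _ _ = 1 - c 0%nat); last lra.
      by field; lra.
  + apply: functional_extensionality => i.
    rewrite ec fsum_S /= -fsum_mult_l; f_equal.
    by apply: fsum_ext => k _; field; lra.
Qed.

Lemma conv_hull_sub (W V : list (point d)) x :
  (forall v, List.In v V -> conv_hull W v) -> conv_hull V x -> conv_hull W x.
Proof.
elim: V x => [|v V IH] x HV hx.
- by case: hx => c [_ [sc _]]; rewrite /fsum /= in sc; lra.
- have HvW : conv_hull W v by apply: HV; left.
  case: (conv_hull_cons hx) => [-> // | [t [y [ht [hy ->]]]]].
  by apply: conv_hull_convex => //; apply: IH => // u hu; apply: HV; right.
Qed.

End ConvexHull.

Lemma exists_uniform (d : nat) (T : Type) (x0 : T) (join : T -> T -> T)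
    (F : 'I_d -> T -> Prop) :
  (forall i x y, F i x -> F i (join x y)) -> (forall i x y, F i y -> F i (join x y)) ->
  (forall i, exists x, F i x) -> exists x, forall i, F i x.
Proof.
move=> Fl Fr ex.
suff /(_ (ord_enum d)) [x Hx] :
    forall l : seq.seq 'I_d, exists x, forall i, i \in l -> F i x.
  by exists x => i; apply: Hx; rewrite mem_ord_enum.
elim=> [|j l [x Hx]]; first by exists x0.
have [y Hy] := ex j; exists (join y x) => i; rewrite seq.in_cons => /orP [/eqP -> | il].
- exact: Fl.
- exact/Fr/Hx.
Qed.

Lemma conv_hull_bounded (d : nat) (W : list (point d)) :
  exists M, forall x i, conv_hull W x -> Rabs (x i) <= M.
Proof.
have [M HM] : exists M, forall i x, conv_hull W x -> Rabs (x i) <= M.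
  apply: (@exists_uniform _ _ 0 Rmax
           (fun i M => forall x, conv_hull W x -> Rabs (x i) <= M))
    => [i M M' HM x hx | i M M' HM x hx | i].
  - exact: Rle_trans (HM x hx) (Rmax_l _ _).
  - exact: Rle_trans (HM x hx) (Rmax_r _ _).
  - set B := fun k => Rabs (List.nth k W (fun _ => 0) i).
    have B0 : forall k, (k < List.length W)%coq_nat -> 0 <= B k.
      by move=> *; apply: Rabs_pos.
    exists (fsum (List.length W) B) => x [c [hc [sc ->]]].
    apply: Rle_trans (fsum_Rabs _ _) _.
    apply: (@Rle_trans _ (fsum (List.length W) (fun k => fsum (List.length W) B * c k))).
    + apply: fsum_le => k hk; rewrite Rabs_mult (Rabs_pos_eq _ (hc k hk)).
      have := fsum_term_le B0 hk; have := hc k hk; rewrite /B; nra.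
    + by rewrite fsum_mult_l sc; lra.
by exists M => x i; apply: HM.
Qed.

Lemma rational_point_common_den (d : nat) (v : point d) : rational_point v ->
  exists (m : positive) (a : lattice_pt d), forall i, v i * IZR (Z.pos m) = IZR (a i).
Proof.
move=> hv.
have [m Hm] : exists m, forall i, exists z, v i * IZR (Z.pos m) = IZR z.
  apply: (@exists_uniform _ _ 1%positive Pos.mul
           (fun i m => exists z, v i * IZR (Z.pos m) = IZR z))
    => [i m m' [z hz] | i m m' [z hz] | i].
  - by exists (z * Z.pos m')%Z; rewrite Pos2Z.inj_mul !mult_IZR -hz; lra.
  - by exists (Z.pos m * z)%Z; rewrite Pos2Z.inj_mul !mult_IZR -hz; lra.
  - have [q ->] := hv i; exists (Qden q), (Qnum q).
    by rewrite /Q2R; field; apply: not_0_IZR.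
have Hz i : {z | v i * IZR (Z.pos m) = IZR z}.
  exact: constructive_indefinite_description.
by exists m, [ffun i => proj1_sig (Hz i)] => i; rewrite ffunE; case: (Hz i).
Qed.

Section Separation.
Variables (d : nat) (v : point d) (m : positive) (k : Z) (a : lattice_pt d).
Hypotheses (k_ge0 : (0 <= k)%Z) (v_a : forall i, v i * IZR (Z.pos m) = IZR (a i)).

Let mR := IZR (Z.pos m).
Let N := mR * IZR k + 1.
Let s := mR / N.
Let w : lattice_pt d := [ffun i => (k * a i)%Z].

Lemma mR_gt0 : 0 < mR. Proof. exact: IZR_lt. Qed.

Lemma N_gt0 : 0 < N.
Proof.
have hk : 0 <= IZR k by apply: IZR_le.
by have := mR_gt0; rewrite /N; nra.
Qed.

Lemma dilation_gt0 : 0 < s.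
Proof. exact: Rdiv_lt_0_compat mR_gt0 N_gt0. Qed.

Lemma N_div_mR_gt : IZR k < N / mR.
Proof.
have := mR_gt0 => hm; rewrite /N (_ : (mR * IZR k + 1) / mR = IZR k + / mR).
- by have := Rinv_0_lt_compat _ hm; lra.
- by field; lra.
Qed.

Lemma vertex_translate i : v i = IZR (a i) * (N / mR) - IZR (w i).
Proof.
by rewrite ffunE mult_IZR -v_a /N /mR; field; apply: not_0_IZR.
Qed.

Lemma dilate_lattice_vertex (P : region d) : P v -> dilate_lattice (translate P w) s a.
Proof.
move=> Pv; exists (fun i => IZR (a i) * (N / mR)); split.
- rewrite /translate (_ : (fun i => _) = v) //.
  by apply: functional_extensionality => i; rewrite vertex_translate.
- by move=> i; have := mR_gt0; have := N_gt0 => hN hm; rewrite /s; field; lra.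
Qed.

Lemma dilate_lattice_offset (Q : region d) z : dilate_lattice (translate Q w) s z ->
  exists u, Q u /\ forall i, u i - v i = IZR (z i - a i) * (N / mR).
Proof.
move=> [y [Qy Hz]]; exists (fun i => y i - IZR (w i)); split => // i.
have hy : y i = IZR (z i) * (N / mR).
  by have := mR_gt0; have := N_gt0 => hN hm; rewrite Hz /s; field; lra.
by rewrite hy vertex_translate minus_IZR; lra.
Qed.

Lemma dilate_lattice_empty (Q : region d) :
  ~ Q v -> (forall u i, Q u -> Rabs (u i - v i) <= IZR k) ->
  forall z, ~ dilate_lattice (translate Q w) s z.
Proof.
move=> nQv Qnear z /dilate_lattice_offset [u [Qu Hu]].
case: (classic (exists i, z i <> a i)) => [[i zi] | za].
- have dist : 1 <= Rabs (IZR (z i - a i)) by rewrite -abs_IZR; apply: IZR_le; lia.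
  have NmR : 0 < N / mR by apply: Rdiv_lt_0_compat; [exact: N_gt0 | exact: mR_gt0].
  have := Qnear u i Qu; rewrite Hu Rabs_mult (Rabs_pos_eq (N / mR)); last lra.
  by have := N_div_mR_gt; nra.
- apply: nQv; rewrite (_ : v = u) //; apply: functional_extensionality => i.
  have zai : z i = a i by apply: NNPP => zi; apply: za; exists i.
  by have := Hu i; rewrite zai Z.sub_diag; lra.
Qed.

End Separation.

Lemma has_card_gt0 (d : nat) (A : lattice_pt d -> Prop) n z :
  has_card A n -> A z -> (0 < n)%coq_nat.
Proof. by move=> [[|y l] [_ [Hl <-]]] /Hl //= _; lia. Qed.

Lemma has_card_eq0 (d : nat) (A : lattice_pt d -> Prop) n :
  has_card A n -> (forall z, ~ A z) -> n = 0%nat.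
Proof. by move=> [[|y l] [_ [Hl <-]]] // A0; case: (A0 y); apply/(Hl y); left. Qed.

Lemma rational_polytope_sub (d : nat) (P Q : region d) :
  rational_polytope P -> rational_polytope Q ->
  (forall (w : lattice_pt d) (s : R), 0 < s ->
     exists n : nat,
       ehrhart_value (translate P w) s n /\ ehrhart_value (translate Q w) s n) ->
  forall x : point d, P x -> Q x.
Proof.
move=> [VP [ratP HP]] [VQ [_ HQ]] L_eq x /HP Px; apply/HQ.
apply: (conv_hull_sub _ Px) => v inVP; apply/HQ; apply: NNPP => nQv.
have Pv : P v.
  by apply/HP; have [j [hj <-]] := In_nth VP v (fun _ => 0) inVP; apply: conv_hull_nth.
have [m [a v_a]] := rational_point_common_den (ratP v inVP).
have [MP HMP] := conv_hull_bounded VP; have [MQ HMQ] := conv_hull_bounded VQ.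
have [k_gt _] := archimed (Rabs (MP + MQ)); have := Rabs_pos (MP + MQ) => MPQ_pos.
set k := up (Rabs (MP + MQ)) in k_gt.
have Qnear u i : Q u -> Rabs (u i - v i) <= IZR k.
  move=> /HQ /(HMQ u i) Qu; have := HMP v i (proj1 (HP v) Pv).
  have := Rabs_triang (u i) (- v i); have := Rle_abs (MP + MQ).
  rewrite Rabs_Ropp /Rminus; lra.
have k_ge0 : (0 <= k)%Z by apply: le_IZR; lra.
have Pa := dilate_lattice_vertex k_ge0 v_a Pv.
have Qa := dilate_lattice_empty k_ge0 v_a nQv Qnear.
have [n [LP LQ]] := L_eq [ffun i => (k * a i)%Z] _ (dilation_gt0 m k_ge0).
have := has_card_gt0 LP Pa.
by rewrite (has_card_eq0 LQ Qa); lia.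
Qed.

Theorem theorem2 (d : nat) (P Q : region d) :
  rational_polytope P -> rational_polytope Q ->
  (forall (w : lattice_pt d) (s : R), 0 < s ->
     exists n : nat,
       ehrhart_value (translate P w) s n /\ ehrhart_value (translate Q w) s n) ->
  forall x : point d, P x <-> Q x.
Proof.
move=> ratP ratQ L_eq x; split; first exact: rational_polytope_sub.
apply: rational_polytope_sub => // w s hs.
by have [n [LP LQ]] := L_eq w s hs; exists n.
Qed.
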